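(* Let $\delta\geq 3$ be an integer such that $\delta+1$ is a prime power. Let $\Delta$ be an integer such that $\Delta-1$ is a positive multiple of $\delta+2$, and let $n$ be an integer such that $n-(\Delta-1)(\delta+1)-1$ is a positive multiple of $(\delta+1)(\delta+2)$. Then there exists a connected graph $G$ of order $n$, maximum degree $\Delta$ and minimum degree at least $\delta$, not containing $C_4$ as a subgraph, such that \[ \mu(G) > \frac{5}{3}\cdot\frac{M(M-1)}{n(n-1)}\cdot\frac{n+2\theta_\Delta}{\theta_\delta} - 13, \] where $\theta_\Delta=(\Delta-1)(\delta+1)+1$, $\theta_\delta=(\delta+2)(\delta+1)$, and $M=n-\theta_\Delta+\theta_\delta$.
   Context: For a connected graph $G$ of order $n\ge2$, $W(G)=\sum_{\{u,v\}\subseteq V(G)} d_G(u,v)$ is the Wiener index and $\mu(G)=\binom{n}{2}^{-1}W(G)$ is the average distance. $C_4$ is the cycle on four vertices; ''not containing $C_4$ as a subgraph'' refers to any (not necessarily induced) subgraph. *)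

From mathcomp Require Import all_boot all_order all_algebra.
Set Implicit Arguments. Unset Strict Implicit. Unset Printing Implicit Defensive.
Import Order.TTheory GRing.Theory Num.Theory.

Section Graphs.
Variable T : finType.
Implicit Types (e : rel T) (u v : T).

Definition simple_graph e := symmetric e /\ irreflexive e.

Definition connected_graph e := forall u v, connect e u v.

Definition walk_of_len e (k : nat) u v : bool :=
  [exists p : k.-tuple T, path e u p && (last u p == v)].

(* graph distance: least k with a walk of length k from u to v
   (for a connected graph this k is < #|T|, hence found in iota 0 #|T|) *)
Definition gdist e u v : nat := find (fun k => walk_of_len e k u v) (iota 0 #|T|).

Definition deg e u : nat := #|[set v | e u v]|.
Definition maxdeg e : nat := \max_(u : T) deg e u.

Definition has_C4 e : Prop :=
  exists a b c d : T, [/\ uniq [:: a; b; c; d], e a b, e b c, e c d & e d a].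
End Graphs.

Definition wiener (n : nat) (e : rel 'I_n) : nat :=
  \sum_(u < n) \sum_(v < n | u < v) gdist e u v.

Definition avg_dist (n : nat) (e : rel 'I_n) : rat :=
  ((wiener e)%:R / ('C(n, 2))%:R)%R.

Definition prime_power (q : nat) : Prop := exists p k, prime p /\ 0 < k /\ q = p ^ k.

From HB Require Import structures.
From mathcomp Require Import all_boot all_order all_algebra.
From mathcomp Require Import finfield ring zify.
Set Implicit Arguments. Unset Strict Implicit. Unset Printing Implicit Defensive.
Import Order.TTheory GRing.Theory Num.Theory.

(* Let q = delta + 1 be a prime power, F the field with q elements and
   t = q (q + 1) = theta_delta.  The graph consists of a centre, a "head" of a
   copies and a "chain" of b blocks, every copy and block having t vertices, so
   that n = 1 + (a + b) t and theta_Delta = 1 + a t.  Adjacency inside copies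
   and blocks follows the polarity y + y' = x x' of the projective plane over F.
   - Two distinct vertices have at most one common neighbour (given by an
     explicit function common_nb), hence there is no C4.
   - The centre has degree a (q + 1) + 1 = Delta, every other vertex has degree
     between q - 1 = delta and q + 2 <= Delta, and every vertex reaches the
     centre.
   - A layer index (five layers per chain block) changes by at most one along
     edges, so vertices of blocks j and k are at distance at least
     5 |j - k| - 4; summing over pairs bounds the Wiener index from below.
   - A polynomial inequality in a, b, t turns this into the stated bound. *)

Section GraphFacts.
Variables (T : finType) (e : rel T).

(* A symmetric graph in which two distinct vertices never have two distinct
   common neighbours contains no 4-cycle: opposite corners of a C4 would. *)
Lemma noC4_of_unique_common_nb :
  symmetric e ->
  (forall u w z z', u != w -> e u z -> e w z -> e u z' -> e w z' -> z = z') ->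
  ~ has_C4 e.
Proof.
move=> e_sym uniq_nb [u [v [w [z [U uv vw wz zu]]]]].
have uw : u != w by apply: contraTneq U => ->; rewrite /= !inE eqxx !orbT.
have vz : v != z by apply: contraTneq U => ->; rewrite /= !inE eqxx !orbT andbF.
by move/eqP: vz; apply; apply: uniq_nb uw uv _ _ wz; rewrite e_sym.
Qed.

Lemma deg_ge_inj (I : finType) (g : I -> T) u :
  injective g -> (forall i, e u (g i)) -> #|I| <= deg e u.
Proof.
move=> g_inj g_nb; rewrite /deg -(card_imset _ g_inj); apply: subset_leq_card.
by apply/subsetP=> v /imsetP [i _ ->]; rewrite inE.
Qed.

Lemma deg_le_cover (I : finType) (g : I -> T) u :
  (forall v, e u v -> exists i, v = g i) -> deg e u <= #|I|.
Proof.
move=> g_cov; apply: leq_trans (leq_imset_card g I); apply: subset_leq_card.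
by apply/subsetP=> v; rewrite inE => /g_cov [i ->]; apply: imset_f.
Qed.

Lemma gdist_ge_potential (l : T -> nat) u v :
  (forall x y, e x y -> `|l x - l y| <= 1) -> (forall x, l x <= #|T|) ->
  `|l u - l v| <= gdist e u v.
Proof.
move=> l_lip l_le.
have walk_ge x p : path e x p -> `|l x - l (last x p)| <= size p.
  elim: p x => [|y p IHp] x /=; first by rewrite distnn.
  by case/andP=> /l_lip exy /IHp; lia.
rewrite /gdist; set P := fun k => walk_of_len e k u v.
case: (boolP (has P (iota 0 #|T|))) => hasP; last first.
  by rewrite (hasNfind hasP) size_iota; have := l_le u; have := l_le v; lia.
have ltk : find P (iota 0 #|T|) < #|T|.
  by rewrite -[X in _ < X](size_iota 0 #|T|) -has_find.
have := nth_find 0 hasP; rewrite nth_iota // add0n /P /walk_of_len.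
case/existsP=> p /andP [pp /eqP lastp].
by have := walk_ge _ _ pp; rewrite lastp size_tuple.
Qed.

End GraphFacts.
Arguments deg_ge_inj {T e I} g {u}.
Arguments deg_le_cover {T e I} g {u}.

Definition relabel (T : finType) n (f : 'I_n -> T) (r : rel T) : rel 'I_n :=
  fun i j => r (f i) (f j).

Lemma relabel_simple (T : finType) n (f : 'I_n -> T) (r : rel T) :
  simple_graph r -> simple_graph (relabel f r).
Proof. by case=> r_sym r_irr; split=> [i j | i]; rewrite /relabel. Qed.

Section Relabel.
Variables (T : finType) (n : nat) (f : 'I_n -> T) (g : T -> 'I_n).
Hypotheses (fK : cancel f g) (gK : cancel g f).
Variable r : rel T.
Local Notation e := (relabel f r).

Lemma relabel_connected : connected_graph r -> connected_graph e.
Proof.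
move=> r_conn i j; have /connectP [p pp lastp] := r_conn (f i) (f j).
apply/connectP; exists (map g p); last by rewrite -[i]fK last_map -lastp fK.
by rewrite -[i]fK path_map (@eq_path _ _ r) // => x y; rewrite /= /relabel !gK.
Qed.

Lemma deg_relabel i : deg e i = deg r (f i).
Proof.
rewrite /deg -(card_imset _ (can_inj fK)); apply: eq_card => v.
rewrite [RHS]inE; apply/imsetP/idP => [[j] | rv]; first by rewrite inE => ? ->.
by exists (g v); rewrite ?inE /relabel gK.
Qed.

Lemma maxdeg_relabel : maxdeg e = maxdeg r.
Proof.
apply/eqP; rewrite eqn_leq; apply/andP; split; apply/bigmax_leqP => x _.
  by rewrite deg_relabel; apply: leq_bigmax.
by rewrite -[x]gK -deg_relabel; apply: leq_bigmax.
Qed.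

Lemma relabel_noC4 : ~ has_C4 r -> ~ has_C4 e.
Proof.
move=> noC4 [a [b [c [d [U ab bc cd da]]]]]; apply: noC4.
exists (f a), (f b), (f c), (f d); split=> //.
by rewrite -(map_inj_uniq (can_inj fK)) in U.
Qed.

Lemma sum_pairs_relabel (h : T -> T -> nat) :
  \sum_(i < n) \sum_(j < n) h (f i) (f j) = \sum_(x : T) \sum_(y : T) h x y.
Proof.
have f_bij : bijective f by exists g.
rewrite (reindex f) /=; last exact: onW_bij.
by apply: eq_bigr => i _; rewrite (reindex f) //=; exact: onW_bij.
Qed.

End Relabel.

Definition ord_label (T : finType) n (cT : #|T| = n) (i : 'I_n) : T :=
  enum_val (cast_ord (esym cT) i).
Definition ord_unlabel (T : finType) n (cT : #|T| = n) (x : T) : 'I_n :=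
  cast_ord cT (enum_rank x).

Lemma ord_labelK (T : finType) n (cT : #|T| = n) :
  cancel (ord_label cT) (ord_unlabel cT).
Proof. by move=> i; rewrite /ord_label /ord_unlabel enum_valK cast_ordKV. Qed.

Lemma ord_unlabelK (T : finType) n (cT : #|T| = n) :
  cancel (ord_unlabel cT) (ord_label cT).
Proof. by move=> x; rewrite /ord_label /ord_unlabel cast_ordK enum_rankK. Qed.

Lemma sum_upper_pairs n (h : 'I_n -> 'I_n -> nat) :
  (forall u v, h u v = h v u) -> (forall u, h u u = 0) ->
  2 * (\sum_(u < n) \sum_(v < n | u < v) h u v) = \sum_(u < n) \sum_(v < n) h u v.
Proof.
move=> h_sym h_diag.
have split_h u v : h u v = (if u < v then h u v else 0) + (if v < u then h v u else 0).
  case: ltngtP => [_|_|/val_inj ->]; by rewrite ?addn0 ?add0n 1?h_sym ?h_diag.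
under [RHS]eq_bigr => u _ do under eq_bigr => v _ do rewrite split_h.
under [RHS]eq_bigr => u _ do rewrite big_split /=.
rewrite big_split /= [X in _ = _ + X]exchange_big /= addnn -mul2n.
by congr (_ * _); apply: eq_bigr => u _; rewrite big_mkcond.
Qed.

Lemma card_upper_pairs n : 2 * (\sum_(u < n) \sum_(v < n | u < v) 1) = n * n.-1.
Proof.
transitivity (2 * (\sum_(u < n) \sum_(v < n | u < v) (u != v : nat))).
  congr (_ * _); apply: eq_bigr => u _; apply: eq_bigr => v uv.
  by rewrite -val_eqE (ltn_eqF uv).
rewrite sum_upper_pairs => [|u v|u]; rewrite ?eqxx 1?eq_sym //.
rewrite (eq_bigr (fun _ => n.-1)) ?sum_nat_const ?card_ord // => u _.
rewrite (eq_bigr (fun v : 'I_n => if v != u then 1 else 0)).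
  by rewrite -big_mkcond sum1_card cardC1 card_ord.
by move=> v _; rewrite eq_sym; case: (_ != _).
Qed.

Lemma bin2_double n : 2 * 'C(n, 2) = n * n.-1.
Proof.
elim: n => [|n IHn] //; rewrite binS bin1 mulnDr IHn.
by case: n {IHn} => //= n; ring.
Qed.

Lemma sum_succ_double b : 2 * \sum_(j < b) j.+1 = b * b.+1.
Proof.
by elim: b => [|b IHb]; rewrite ?big_ord0 // big_ord_recr /= mulnDr IHb; ring.
Qed.

Definition path_dist_sum b := \sum_(j < b) \sum_(k < b) `|j - k|.

Lemma path_dist_sumE b : 3 * path_dist_sum b + b = b ^ 3.
Proof.
elim: b => [|b IHb]; first by rewrite /path_dist_sum big_ord0.
have last_dists : \sum_(j < b) `|j - b| = \sum_(j < b) j.+1.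
  rewrite (reindex_inj rev_ord_inj); apply: eq_bigr => j _ /=.
  by have := ltn_ord j; lia.
have step : path_dist_sum b.+1 = path_dist_sum b + 2 * \sum_(j < b) j.+1.
  rewrite /path_dist_sum big_ord_recr /=.
  under eq_bigr => j _ do rewrite big_ord_recr /=.
  rewrite big_split /= big_ord_recr /= distnn addn0 last_dists.
  under [X in _ + X = _]eq_bigr => k _ do rewrite distnC.
  by rewrite last_dists -addnA addnn -mul2n.
by rewrite step; have := sum_succ_double b; lia.
Qed.

Lemma sum_fst (I J : finType) (f : I -> nat) :
  \sum_(p : I * J) f p.1 = #|J| * \sum_(i : I) f i.
Proof.
rewrite -(pair_bigA _ (fun i (_ : J) => f i)) /= big_distrr /=.
by apply: eq_bigr => i _; rewrite sum_nat_const.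
Qed.

Ltac split_hyps := repeat match goal with
  | H : is_true (_ && _) |- _ => case/andP: H
  | H : is_true (_ || _) |- _ => case/orP: H
  | |- is_true (_ && _) -> _ => case/andP
  | |- is_true (_ || _) -> _ => case/orP
  | |- is_true (_ == _) -> _ => move/eqP=> ?; subst
  | |- _ -> _ => move=> ?
  end.

Section Construction.
Variables (F : finFieldType) (a b : nat).
Local Open Scope ring_scope.

Definition Fnz := {x : F | x != 0}.

(* Vertices: a centre Ctr; for each i < a a head copy made of Hinf i, the
   Hpt i x (x <> 0) and the Hxy i x y; for each j < b a chain block made of the
   five layers Cv j, Ca j x, Cm j x y, Cb j y and Cw j (with x, y <> 0 where
   typed Fnz).  Copies and blocks both have 1 + (q - 1) + q^2 = q (q + 1)
   vertices. *)
Inductive vtx :=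
| Ctr | Hinf of 'I_a | Hpt of 'I_a & Fnz | Hxy of 'I_a & F & F
| Cv of 'I_b | Ca of 'I_b & Fnz | Cm of 'I_b & Fnz & F | Cb of 'I_b & Fnz | Cw of 'I_b.

Definition vtx_code := (unit + ('I_a * (unit + (Fnz + F * F)))
  + ('I_b * (bool + (Fnz + ((Fnz * F) + Fnz)))))%type.

Definition encode (v : vtx) : vtx_code := match v with
| Ctr => inl (inl tt)
| Hinf i => inl (inr (i, inl tt))
| Hpt i x => inl (inr (i, inr (inl x)))
| Hxy i x y => inl (inr (i, inr (inr (x, y))))
| Cv j => inr (j, inl true)
| Cw j => inr (j, inl false)
| Ca j x => inr (j, inr (inl x))
| Cm j x y => inr (j, inr (inr (inl (x, y))))
| Cb j y => inr (j, inr (inr (inr y)))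
end.

Definition decode (s : vtx_code) : vtx := match s with
| inl (inl tt) => Ctr
| inl (inr (i, inl tt)) => Hinf i
| inl (inr (i, inr (inl x))) => Hpt i x
| inl (inr (i, inr (inr (x, y)))) => Hxy i x y
| inr (j, inl true) => Cv j
| inr (j, inl false) => Cw j
| inr (j, inr (inl x)) => Ca j x
| inr (j, inr (inr (inl (x, y)))) => Cm j x y
| inr (j, inr (inr (inr y))) => Cb j y
end.

Lemma encodeK : cancel encode decode. Proof. by case. Qed.
Lemma decodeK : cancel decode encode.
Proof. by case=> [[[]|[i [[]|[x|[x y]]]]]|[j [[]|[x|[[x y]|y]]]]]. Qed.

HB.instance Definition _ := Finite.copy vtx (pcan_type (can_pcan encodeK)).

(* Inside a head copy and inside a chain block, the
   vertices (x, y) and (x', y') are adjacent when y + y' = x x' (the polarity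
   relation of the projective plane over F); Hinf and Hpt, resp. the layers of
   a block, are joined along the coordinates x and y; the centre is joined to
   every Hinf i and Hxy i 0 y and to Cv 0, and block j to block j + 1 by the
   edge Cw j -- Cv j.+1. *)
Definition adj0 (u v : vtx) : bool := match u, v with
| Ctr, Hinf _ => true
| Ctr, Hxy _ x _ => x == 0
| Ctr, Cv j => val j == 0%N
| Hinf i, Hpt i' _ => i == i'
| Hpt i x, Hxy i' x' _ => (i == i') && (val x == x')
| Hxy i x y, Hxy i' x' y' => (i == i') && ((x, y) != (x', y')) && (y + y' == x * x')
| Cv j, Ca j' _ => j == j'
| Ca j x, Cm j' x' _ => (j == j') && (x == x')
| Cm j _ y, Cb j' y' => (j == j') && (y == val y')
| Cm j x y, Cm j' x' y' =>
    (j == j') && ((x, y) != (x', y')) && (y + y' == val x * val x')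
| Cb j _, Cw j' => j == j'
| Cw j, Cv j' => (val j).+1 == val j'
| _, _ => false
end.

Definition adj (u v : vtx) : bool := adj0 u v || adj0 v u.

Lemma adj_sym : symmetric adj.
Proof. by move=> u v; rewrite /adj orbC. Qed.

Lemma adj_irr : irreflexive adj.
Proof.
by case=> //= *; rewrite /adj /= ?eqxx /= ?andbF ?orbF //;
  case: (_ == _) => //=; case: (_ == _).
Qed.

Lemma adj_simple : simple_graph adj.
Proof. by split; [exact: adj_sym | exact: adj_irr]. Qed.

End Construction.
Arguments Ctr {F a b}. Arguments Hinf {F a b}. Arguments Hpt {F a b}.
Arguments Hxy {F a b}. Arguments Cv {F a b}. Arguments Ca {F a b}.
Arguments Cm {F a b}. Arguments Cb {F a b}. Arguments Cw {F a b}.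

Section CommonNeighbour.
Variables (F : finFieldType) (a b : nat).
Local Open Scope ring_scope.
Local Notation vtx := (vtx F a b).
Local Notation adj := (@adj F a b).

(* Coercing an element of F to a nonzero one (1 being the default). *)
Definition one_nz : Fnz F := exist _ 1 (oner_neq0 F).
Definition to_nz (x : F) : Fnz F := insubd one_nz x.
Lemma to_nzK (x : Fnz F) : to_nz (val x) = x. Proof. exact: valKd. Qed.
Lemma val_to_nz (x : F) : x != 0 -> val (to_nz x) = x.
Proof. by move=> nz_x; rewrite /to_nz insubdK. Qed.

(* The common neighbour of two distinct vertices, whenever one exists: in the
   polarity parts it is the pole of the line through the two points. *)
Definition common_nb (u w : vtx) : vtx := match u, w with
| Hinf _, Hinf _ => Ctr
| Hinf i, Hxy _ x _ => if x == 0 then Ctr else Hpt i (to_nz x)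
| Hxy _ x _, Hinf i => if x == 0 then Ctr else Hpt i (to_nz x)
| Hxy i x y, Hxy i' x' y' => if i != i' then Ctr else if x == x' then
     (if x == 0 then Ctr else Hpt i (to_nz x))
     else Hxy i ((y - y') / (x - x')) (x * ((y - y') / (x - x')) - y)
| Hpt i _, Ctr | Ctr, Hpt i _ => Hinf i
| Hpt i _, Hpt _ _ => Hinf i
| Hpt i x, Hxy _ x' y' | Hxy _ x' y', Hpt i x => Hxy i (val x) (val x * x' - y')
| Ctr, Hxy i' _ y' | Hxy i' _ y', Ctr => Hxy i' 0 (- y')
| Hinf _, Cv _ | Cv _, Hinf _ | Hxy _ _ _, Cv _ | Cv _, Hxy _ _ _ => Ctr
| Ca j _, Ctr | Ctr, Ca j _ => Cv j
| Ca j _, Ca _ _ => Cv j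
| Ca j _, Cw _ | Cw _, Ca j _ => Cv j
| Cv _, Cm j x _ | Cm j x _, Cv _ => Ca j x
| Cm j x y, Cm _ x' y' => if x == x' then Ca j x else if y == y' then Cb j (to_nz y)
     else Cm j (to_nz ((y - y') / (val x - val x')))
              (val x * ((y - y') / (val x - val x')) - y)
| Ca j x, Cb _ y | Cb _ y, Ca j x => Cm j x (val y)
| Ca j x, Cm _ x' y' | Cm _ x' y', Ca j x => Cm j x (val x * val x' - y')
| Cb j y, Cm _ x' y' | Cm _ x' y', Cb j y =>
    Cm j (to_nz ((val y + y') / val x')) (val y)
| Cm j _ y, Cw _ | Cw _, Cm j _ y => Cb j (to_nz y)
| Cb j _, Cb _ _ => Cw j
| Cb j _, Cv _ | Cv _, Cb j _ => Cw j
| _, _ => Ctr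
end.

Ltac close_degenerate := match goal with
  | H : is_true (?x != ?x) |- _ => by rewrite eqxx in H
  | H : sval ?x = 0 |- _ => by move: (valP x) => /=; rewrite H eqxx
  | H : 0 = sval ?x |- _ => by move: (valP x) => /=; rewrite -H eqxx
  | H1 : (?k).+1 = ?j, H2 : ?j = 0%N |- _ => by rewrite H2 in H1
  | |- context [sval ?x == 0] => rewrite (negbTE (valP x)); close_degenerate
  | |- context [if ?c then _ else _] => by case: ifP
  | |- _ => by []
  end.

Lemma subr_eq0_of_eq (u v : F) : u = v -> u - v = 0.
Proof. by move->; rewrite subrr. Qed.

(* Proves an equation of F that is, up to ring normalisation, one equational
   hypothesis or the difference of two of them. *)
Ltac linear_eq := match goal with
 | H : ?L = ?R |- ?A = ?B => apply/eqP; rewrite -subr_eq0; apply/eqP;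
     first [ transitivity (L - R); [ring | by rewrite (subr_eq0_of_eq H)]
           | transitivity (R - L); [ring | by rewrite (subr_eq0_of_eq (esym H))] ]
 | H1 : ?L1 = ?R1, H2 : ?L2 = ?R2 |- ?A = ?B => apply/eqP; rewrite -subr_eq0; apply/eqP;
     first [ transitivity ((L1 - R1) - (L2 - R2));
               [ring | by rewrite (subr_eq0_of_eq H1) ?(subr_eq0_of_eq H2) ?subrr]
           | transitivity ((L2 - R2) - (L1 - R1));
               [ring | by rewrite (subr_eq0_of_eq H2) ?(subr_eq0_of_eq H1) ?subrr] ]
end.

Ltac close_congr := match goal with
  | H : sval ?u = sval ?v |- _ => move/val_inj: H => H; subst; close_degenerate
  | |- Hxy _ _ _ = Hxy _ _ _ => congr Hxy; linear_eq
  | |- Cm _ _ _ = Cm _ _ _ => congr Cm; linear_eq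
  end.

Lemma polar_abscissa (x y x1 y1 x2 y2 : F) :
  x1 != x2 -> y1 + y = x1 * x -> y2 + y = x2 * x -> x = (y1 - y2) / (x1 - x2).
Proof.
move=> nz h1 h2; have nz' : x1 - x2 != 0 by rewrite subr_eq0.
apply: (mulIf nz'); rewrite divfK //.
have -> : y1 - y2 = (y1 + y) - (y2 + y) by ring.
by rewrite h1 h2; ring.
Qed.

Ltac close_same_index := let E := fresh "E" in match goal with
  | H1 : (?u).+1 = ?w, H2 : (?v).+1 = ?w |- _ =>
      have E : u = v by (rewrite -H2 in H1; case: H1)
  | H1 : ?w = ?u, H2 : ?w = ?v |- _ => have E : u = v by (rewrite -H2 -H1)
  end; move/val_inj: E => E; subst; close_degenerate.

(* A common neighbour of two polarity vertices in a head copy is the pole of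
   the line through them. *)
Ltac solve_head_polar := rewrite /=; match goal with
  |- Hxy _ ?x ?y = ?R => match R with context [ (?y1 - ?y2) / (?x1 - ?x2) ] =>
  have [E|NE] := eqVneq x1 x2;
  [ subst; let E2 := fresh in (have E2 : y1 = y2 by linear_eq); subst;
    close_degenerate
  | let h1 := fresh in let h2 := fresh in
    (have h1 : y1 + y = x1 * x by linear_eq);
    (have h2 : y2 + y = x2 * x by linear_eq);
    match goal with NE : is_true (x1 != x2) |- _ =>
      rewrite -(polar_abscissa NE h1 h2) end;
    congr Hxy; linear_eq ] end end.

(* Same for the Cm layer of a chain block, where abscissae are nonzero: two
   Cm vertices with equal ordinates share the neighbour Cb instead. *)
Ltac solve_chain_polar := rewrite /=; match goal with
  |- Cm _ ?x ?y = ?R => match R with context [ (?y1 - ?y2) / (?a1 - ?a2) ] =>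
  match a1 with sval ?x1 => match a2 with sval ?x2 =>
  have [E|NE] := eqVneq x1 x2;
  [ subst; let E2 := fresh in (have E2 : y1 = y2 by linear_eq); subst;
    close_degenerate
  | let nz := fresh in (have nz : sval x1 != sval x2 by rewrite (inj_eq val_inj));
    have [E2|NE2] := eqVneq y1 y2;
    [ subst; let h := fresh in
      (have h : sval x * (sval x1 - sval x2) = 0 by linear_eq);
      by move/eqP: h; rewrite mulf_eq0 (negbTE (valP x)) subr_eq0 (negbTE nz)
    | let h1 := fresh in let h2 := fresh in
      (have h1 : y1 + y = sval x1 * sval x by linear_eq);
      (have h2 : y2 + y = sval x2 * sval x by linear_eq);
      let Ex := fresh in have Ex := polar_abscissa nz h1 h2;
      (have -> : to_nz ((y1 - y2) / (sval x1 - sval x2)) = x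
         by rewrite -Ex to_nzK);
      rewrite -Ex; congr Cm; linear_eq ] ] end end end end.

Lemma to_nz_div (x q : Fnz F) (p : F) :
  p = sval q * sval x -> to_nz (p / sval q) = x.
Proof. by move=> ->; rewrite [sval q * _]mulrC mulfK ?to_nzK //; exact: (valP q). Qed.

Ltac solve_chain_cb := congr Cm; symmetry; apply: to_nz_div; linear_eq.

Ltac close_by_case := case: eqP => E; [subst; close_degenerate | by []].

Lemma common_nbP (u w z : vtx) :
  u != w -> adj u z -> adj w z -> z = common_nb u w.
Proof.
case: z => [|i|i x|i x y|j|j x|j x y|j y|j];
case: u => [|i1|i1 x1|i1 x1 y1|j1|j1 x1|j1 x1 y1|j1 y1|j1];
case: w => [|i2|i2 x2|i2 x2 y2|j2|j2 x2|j2 x2 y2|j2 y2|j2];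
rewrite /adj /= ?orbF //.
all: split_hyps; rewrite /= ?eqxx ?to_nzK //.
all: try solve [ close_degenerate | close_congr | close_same_index
               | solve_head_polar | solve_chain_polar | solve_chain_cb
               | close_by_case ].
Qed.

Lemma adj_noC4 : ~ has_C4 adj.
Proof.
apply: noC4_of_unique_common_nb; first exact: adj_sym.
move=> u w z z' uw uz wz uz' wz'.
by rewrite (common_nbP uw uz wz) (common_nbP uw uz' wz').
Qed.

End CommonNeighbour.

Section Degrees.
Variables (F : finFieldType) (a b : nat).
Local Notation vtx := (vtx F a b).
Local Notation adj := (@adj F a b).
Local Notation q := #|{: F}|.

Lemma card_Fnz : #|{: Fnz F}| = q.-1.
Proof. by rewrite card_sig -(cardC1 (0%R : F)); apply: eq_card. Qed.

Local Open Scope ring_scope.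

(* The successor and predecessor of a block index (clamped at the ends). *)
Definition osucc (j : 'I_b) : 'I_b := insubd j j.+1.
Definition opred (j : 'I_b) : 'I_b := insubd j j.-1.

Lemma osuccE (j j' : 'I_b) : (val j).+1 = val j' -> osucc j = j'.
Proof.
move=> e; have h : ((val j).+1 < b)%N by rewrite e ltn_ord.
by apply: val_inj; rewrite /osucc insubdK.
Qed.

Lemma opredE (j j' : 'I_b) : (val j').+1 = val j -> opred j = j'.
Proof.
move=> e; have h : ((val j).-1 < b)%N by rewrite -e /= ltn_ord.
by apply: val_inj; rewrite /opred insubdK // -e.
Qed.

(* Every vertex has at least q - 1 neighbours: each case exhibits an injective
   family of neighbours indexed by Fnz (for the centre, in the head copy 0,
   which exists as a > 0). *)
Lemma deg_adj_ge (ha : (0 < a)%N) (u : vtx) : (q.-1 <= deg adj u)%N.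
Proof.
pose head0 : 'I_a := Ordinal ha.
rewrite -card_Fnz; case: u => [|i|i x|i x y|j|j x|j x y|j y|j].
- apply: (deg_ge_inj (fun x : Fnz F => Hxy head0 0 (val x))).
    by move=> x1 x2 [] /val_inj.
  by move=> t; rewrite /adj /= eqxx.
- apply: (deg_ge_inj (fun x : Fnz F => Hpt i x)); first by move=> x1 x2 [].
  by move=> t; rewrite /adj /= eqxx.
- apply: (deg_ge_inj (fun y : Fnz F => Hxy i (val x) (val y))).
    by move=> x1 x2 [] /val_inj.
  by move=> t; rewrite /adj /= !eqxx.
- apply: (deg_ge_inj (fun x' : Fnz F =>
    if val x' == x then Hpt i x' else Hxy i (val x') (x * val x' - y))).
    move=> x1 x2; case: eqP => e1; case: eqP => e2 //=.
      by move: e1 e2 => <- /val_inj.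
    by case=> /val_inj.
  move=> t; case: eqP => e1; rewrite /adj /= ?e1 ?eqxx //=.
  apply/orP; left; apply/andP; split; last by apply/eqP; ring.
  by rewrite xpair_eqE negb_and; apply/orP; left; apply/eqP => E; apply: e1; rewrite E.
- apply: (deg_ge_inj (fun x : Fnz F => Ca j x)); first by move=> x1 x2 [].
  by move=> t; rewrite /adj /= eqxx.
- apply: (deg_ge_inj (fun y : Fnz F => Cm j x (val y))).
    by move=> x1 x2 [] /val_inj.
  by move=> t; rewrite /adj /= !eqxx.
- apply: (deg_ge_inj (fun x' : Fnz F =>
    if x' == x then Ca j x else Cm j x' (val x * val x' - y))).
    move=> x1 x2; case: eqP => e1; case: eqP => e2 //=; first by rewrite e1 e2.
    by case.
  move=> t; case: eqP => e1; rewrite /adj /= ?e1 ?eqxx //=.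
  apply/orP; left; apply/andP; split; last by apply/eqP; ring.
  by rewrite xpair_eqE negb_and; apply/orP; left; apply/eqP => E; apply: e1; rewrite E.
- apply: (deg_ge_inj (fun x : Fnz F => Cm j x (val y))); first by move=> x1 x2 [].
  by move=> t; rewrite /adj /= !eqxx.
- apply: (deg_ge_inj (fun y : Fnz F => Cb j y)); first by move=> x1 x2 [].
  by move=> t; rewrite /adj /= eqxx.
Qed.

Lemma polar_ordinate (x y x1 y1 : F) : y + y1 = x * x1 -> y1 = x * x1 - y.
Proof. by move=> <-; ring. Qed.
Lemma polar_ordinate' (x y x1 y1 : F) : y1 + y = x1 * x -> y1 = x * x1 - y.
Proof. by move=> h; rewrite mulrC -h; ring. Qed.
Ltac solve_ordinate := match goal with H : _ = _ |- _ =>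
  first [exact: polar_ordinate H | exact: polar_ordinate' H] end.

Ltac nb_cases := case=> [|i1|i1 x1|i1 x1 y1|j1|j1 x1|j1 x1 y1|j1 y1|j1];
  rewrite /adj /= ?orbF //; split_hyps.

Lemma deg_adj_le (u : vtx) : u != Ctr -> (deg adj u <= q.+2)%N.
Proof.
have card_idx : #|{: option (option F)}| = q.+2 by rewrite !card_option.
rewrite -card_idx; case: u => [|i|i x|i x y|j|j x|j x y|j y|j] // _.
- apply: (deg_le_cover (fun t =>
    if t is Some (Some x) then Hpt i (to_nz x) else Ctr)).
  by nb_cases; [exists None | exists (Some (Some (val x1))); rewrite to_nzK].
- apply: (deg_le_cover (fun t =>
    if t is Some (Some y) then Hxy i (val x) y else Hinf i)).
  by nb_cases; [exists None | exists (Some (Some y1))].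
- apply: (deg_le_cover (fun t => match t with
    | None => Hpt i (to_nz x) | Some None => Ctr
    | Some (Some x') => Hxy i x' (x * x' - y) end)).
  nb_cases.
  + by exists (Some None).
  + by exists None; rewrite to_nzK.
  + by exists (Some (Some x1)); congr Hxy; solve_ordinate.
  + by exists (Some (Some x1)); congr Hxy; solve_ordinate.
- apply: (deg_le_cover (fun t => match t with
    | None => Ctr | Some None => Cw (opred j)
    | Some (Some x) => Ca j (to_nz x) end)).
  nb_cases.
  + by exists None.
  + by exists (Some (Some (val x1))); rewrite to_nzK.
  + by exists (Some None); match goal with H : _.+1 = _ |- _ => rewrite (opredE H) end.
- apply: (deg_le_cover (fun t =>
    if t is Some (Some y) then Cm j x y else Cv j)).
  by nb_cases; [exists None | exists (Some (Some y1))].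
- apply: (deg_le_cover (fun t => match t with
    | None => Ca j x | Some None => Cb j (to_nz y)
    | Some (Some x') => Cm j (to_nz x') (val x * x' - y) end)).
  nb_cases.
  + by exists None.
  + by exists (Some (Some (val x1))); rewrite to_nzK; congr Cm; solve_ordinate.
  + by exists (Some (Some (val x1))); rewrite to_nzK; congr Cm; solve_ordinate.
  + by exists (Some None); rewrite to_nzK.
- apply: (deg_le_cover (fun t =>
    if t is Some (Some x) then Cm j (to_nz x) (val y) else Cw j)).
  by nb_cases; [exists (Some (Some (val x1))); rewrite to_nzK | exists None].
- apply: (deg_le_cover (fun t =>
    if t is Some (Some y) then Cb j (to_nz y) else Cv (osucc j))).
  nb_cases; last by exists (Some (Some (val y1))); rewrite to_nzK.
  by exists None; match goal with H : _.+1 = _ |- _ => rewrite (osuccE H) end.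
Qed.

(* The centre sees Hinf i and the q points Hxy i 0 y of each head copy, and
   Cv 0: it has degree a (q + 1) + 1 = Delta. *)
Lemma deg_Ctr (hb : (0 < b)%N) : deg adj Ctr = (a * q.+1).+1.
Proof.
pose block0 : 'I_b := Ordinal hb.
pose g := fun t : option ('I_a * option F) => match t with
  | None => Cv block0 | Some (i, None) => Hinf i | Some (i, Some y) => Hxy i 0 y end.
have card_idx : #|{: option ('I_a * option F)}| = (a * q.+1).+1.
  by rewrite card_option card_prod card_ord card_option.
rewrite -card_idx; apply/eqP; rewrite eqn_leq; apply/andP; split.
  apply: (deg_le_cover g); nb_cases.
  + by exists (Some (i1, None)).
  + by exists (Some (i1, Some y1)).
  + by exists None; congr Cv; apply: val_inj.
apply: (deg_ge_inj g).
  by case=> [[i [y|]]|] [[i' [y'|]]|] //= [] // -> // ->.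
by case=> [[i [y|]]|] //=; rewrite /adj /= ?eqxx.
Qed.

(* Hence the maximum degree is attained at the centre (a > 0 ensures q + 2 is
   not larger). *)
Lemma maxdeg_adj (ha : (0 < a)%N) (hb : (0 < b)%N) : maxdeg adj = (a * q.+1).+1.
Proof.
apply/eqP; rewrite eqn_leq; apply/andP; split; last by rewrite -deg_Ctr // leq_bigmax.
apply/bigmax_leqP => u _; have [->|not_ctr] := eqVneq u Ctr; first by rewrite deg_Ctr.
by apply: leq_trans (deg_adj_le not_ctr) _; rewrite ltnS leq_pmull.
Qed.

(* Connectivity: every vertex of a chain block reaches the entry Cv j of its
   block, Cv j.+1 reaches Cv j through Cw j, and Cv 0 and the head copies are
   attached to the centre. *)
Lemma connect_step (u v w : vtx) : adj u v -> connect adj v w -> connect adj u w.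
Proof. by move=> uv; apply: connect_trans; apply: connect1. Qed.

Lemma connect_Ca j x : connect adj (Ca j x) (Cv j).
Proof. by apply: connect1; rewrite /adj /= eqxx. Qed.

Lemma connect_Cm j x y : connect adj (Cm j x y) (Cv j).
Proof.
by apply: (@connect_step _ (Ca j x)); [rewrite /adj /= !eqxx ?orbT | exact: connect_Ca].
Qed.

Lemma connect_Cb j y : connect adj (Cb j y) (Cv j).
Proof.
apply: (@connect_step _ (Cm j (one_nz F) (val y))); last exact: connect_Cm.
by rewrite /adj /= !eqxx ?orbT.
Qed.

Lemma connect_Cw j : connect adj (Cw j) (Cv j).
Proof.
apply: (@connect_step _ (Cb j (one_nz F))); last exact: connect_Cb.
by rewrite /adj /= eqxx ?orbT.
Qed.

Lemma connect_Cv_Ctr (j : 'I_b) : connect adj (Cv j) Ctr.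
Proof.
case: j => j; elim: j => [|j IHj] ltjb; first by apply: connect1; rewrite /adj.
have ltj : (j < b)%N by apply: ltnW.
apply: (@connect_step _ (Cw (Ordinal ltj))); first by rewrite /adj /= eqxx ?orbT.
exact: connect_trans (connect_Cw _) (IHj ltj).
Qed.

Lemma connect_Ctr (u : vtx) : connect adj u Ctr.
Proof.
have Hinf_Ctr i : connect adj (Hinf i) Ctr by apply: connect1; rewrite /adj.
case: u => [|i|i x|i x y|j|j x|j x y|j y|j]; rewrite ?connect0 //.
- by apply: (@connect_step _ (Hinf i)); rewrite // /adj /= eqxx ?orbT.
- have [->|nz_x] := eqVneq x 0; first by apply: connect1; rewrite /adj /= eqxx ?orbT.
  apply: (@connect_step _ (Hpt i (to_nz x))); last first.
    by apply: (@connect_step _ (Hinf i)); rewrite // /adj /= eqxx ?orbT.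
  by rewrite /adj /= eqxx val_to_nz // eqxx ?orbT.
all: apply: connect_trans (connect_Cv_Ctr j).
all: by rewrite ?connect_Ca ?connect_Cm ?connect_Cb ?connect_Cw.
Qed.

Lemma adj_connected : connected_graph adj.
Proof.
move=> u v; apply: connect_trans (connect_Ctr u) _.
by rewrite (sym_connect_sym (@adj_sym F a b)) connect_Ctr.
Qed.

End Degrees.

Section Layers.
Variables (F : finFieldType) (a b : nat).
Local Notation vtx := (vtx F a b).
Local Notation adj := (@adj F a b).
Local Notation q := #|{: F}|.
Local Notation t := (q * q.+1).

Definition layer (u : vtx) : nat := match u with
| Cv j => 5 * j + 1 | Ca j _ => 5 * j + 2 | Cm j _ _ => 5 * j + 3
| Cb j _ => 5 * j + 4 | Cw j => 5 * j + 5 | _ => 0 end.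

Definition block (u : vtx) : nat := match u with
| Cv j | Ca j _ | Cm j _ _ | Cb j _ | Cw j => j.+1 | _ => 0 end.

Lemma layer_adj u v : adj u v -> `|layer u - layer v| <= 1.
Proof.
suff layer_adj0 w z : adj0 w z -> `|layer w - layer z| <= 1.
  by case/orP=> /layer_adj0; rewrite distnC.
case: w => [|i|i x|i x y|j|j x|j x y|j y|j];
case: z => [|i1|i1 x1|i1 x1 y1|j1|j1 x1|j1 x1 y1|j1 y1|j1] //=; rewrite ?andbT;
  try (move/andP=> [/andP [/eqP E _] _] || move/andP=> [/eqP E _] || move/eqP=> E);
  try subst; lia.
Qed.

Lemma block_dist_le u v : 5 * `|block u - block v| <= `|layer u - layer v| + 4.
Proof. by case: u; case: v => /= *; lia. Qed.

Lemma layer_le u : layer u <= 5 * b.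
Proof. by case: u => //= j *; have := ltn_ord j; lia. Qed.

(* Each head copy and each chain block has t = q (q + 1) vertices. *)
Lemma sum_block (G : nat -> nat) :
  \sum_(x : vtx) G (block x) = G 0 * (1 + a * t) + t * \sum_(j < b) G j.+1.
Proof.
have q_gt0 : 0 < q by apply/card_gt0P; exists 0%R.
rewrite (reindex (@decode F a b)); last first.
  by apply: onW_bij; exact: (Bijective (@decodeK F a b) (@encodeK F a b)).
rewrite big_sumType /= (eq_bigr (fun _ => G 0)); last by case=> [[]|[i [[]|[x|[x y]]]]].
rewrite sum_nat_const card_sum card_unit card_prod card_ord !card_sum card_unit.
rewrite card_prod card_Fnz (eq_bigr (fun p => G (val p.1).+1)); last first.
  by case=> j [[]|[x|[[x y]|y]]].
rewrite (sum_fst _ (fun j : 'I_b => G j.+1)) !card_sum card_bool card_prod !card_Fnz.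
by case: q q_gt0 => // q' _ /=; congr (_ + _); ring.
Qed.

Lemma card_vtx : #|{: vtx}| = 1 + (a + b) * t.
Proof. by rewrite -sum1_card (sum_block (fun _ => 1)) sum1_card card_ord; ring. Qed.

Lemma sum_block_dist :
  \sum_(x : vtx) \sum_(y : vtx) `|block x - block y|
  = t * (1 + a * t) * (b * b.+1) + t * t * path_dist_sum b.
Proof.
pose G (m : nat) := `|m - 0| * (1 + a * t) + t * \sum_(j < b) `|m - j.+1|.
transitivity (\sum_(x : vtx) G (block x)).
  by apply: eq_bigr => x _; rewrite (sum_block (fun m => `|block x - m|)).
have sum_succ : \sum_(j < b) `|0 - j.+1| = \sum_(j < b) j.+1.
  by apply: eq_bigr => j _; rewrite dist0n.
have sum_rows : \sum_(j < b) G j.+1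
    = (\sum_(j < b) j.+1) * (1 + a * t) + t * path_dist_sum b.
  rewrite big_split /= -big_distrl -big_distrr /=; congr (_ * _ + _ * _).
    by apply: eq_bigr => j _; lia.
  by apply: eq_bigr => j _; apply: eq_bigr => k _; lia.
rewrite (sum_block G) sum_rows /G distnn mul0n add0n sum_succ -(sum_succ_double b).
ring.
Qed.

End Layers.

(* The polynomial inequality behind the bound, with n = 1 + (a + b) t and
   D = path_dist_sum b: after multiplication by t, the left-hand side is
   5 M^2 (n + 2 theta_Delta) with M = (b + 1) t and theta_Delta = 1 + a t. *)
Lemma polynomial_gap (a b t D : nat) : 0 < a -> 0 < b -> 0 < t -> 3 * D + b = b ^ 3 ->
  5 * (b + 1) * ((b + 1) * t) * (3 + (3 * a + b) * t) <
  15 * (t * (1 + a * t) * (b * b.+1) + t * t * D)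
    + 27 * ((1 + (a + b) * t) * ((a + b) * t)).
Proof.
move=> a_gt0 b_gt0 t_gt0 D_eq.
have [A eA] : exists A, a = A + 1 by exists a.-1; rewrite addn1 prednK.
have [B eB] : exists B, b = B + 1 by exists b.-1; rewrite addn1 prednK.
pose gap := 24*t + 58*t*t + 12*B*t + 63*B*t*t + 17*B*B*t*t + 27*A*t + 78*A*t*t
  + 39*A*B*t*t + 27*A*A*t*t.
have identity :
    5 * (b + 1) * ((b + 1) * t) * (3 + (3 * a + b) * t) + 5 * t * t * b + gap
  = 15 * t * (1 + a * t) * (b * (b + 1)) + 5 * t * t * (b * b * b)
    + 27 * ((1 + (a + b) * t) * ((a + b) * t)).
  by rewrite /gap eA eB; ring.
have cube : b * b * b = 3 * D + b by rewrite D_eq; ring.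
rewrite cube in identity.
have gap_pos : 0 < gap by rewrite /gap; lia.
lia.
Qed.

Section FieldInequality.
Local Open Scope ring_scope.

Lemma avg_dist_of_gap (R : realFieldType) (n W t th : R) :
  1 < n -> 0 < t ->
  5 * ((n - th + t) * (n - th + t - 1) * (n + 2 * th))
    < 6 * t * W + 39 * t * (n * (n - 1)) ->
  5 / 3 * ((n - th + t) * (n - th + t - 1) / (n * (n - 1))) * ((n + 2 * th) / t) - 13
    < W / (n * (n - 1) / 2).
Proof.
move=> n_gt1 t_gt0 gap; set M := n - th + t in gap *.
have n_gt0 : 0 < n by apply: lt_trans n_gt1.
have n1_gt0 : 0 < n - 1 by rewrite subr_gt0.
rewrite -subr_gt0.
have -> : W / (n * (n - 1) / 2) - (5 / 3 * (M * (M - 1) / (n * (n - 1)))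
      * ((n + 2 * th) / t) - 13)
    = (6 * t * W + 39 * t * (n * (n - 1)) - 5 * (M * (M - 1) * (n + 2 * th)))
      / (3 * t * (n * (n - 1))).
  by field; rewrite !lt0r_neq0.
by rewrite divr_gt0 ?subr_gt0 // !mulr_gt0.
Qed.

End FieldInequality.

Section AverageDistance.
Variables (F : finFieldType) (a b n : nat).
Hypotheses (a_gt0 : 0 < a) (b_gt0 : 0 < b).
Hypothesis card_n : #|{: vtx F a b}| = n.
Local Notation q := #|{: F}|.
Local Notation t := (q * q.+1).
Local Notation f := (ord_label card_n).
Local Notation e := (relabel f (@adj F a b)).

(* Lower bound on the Wiener index: vertices in chain blocks j and k are at
   distance at least 5 |j - k| - 4. *)
Lemma wiener_block_bound :
  5 * (t * (1 + a * t) * (b * b.+1) + t * t * path_dist_sum b)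
  <= 2 * wiener e + 4 * (n * n.-1).
Proof.
have fK := ord_labelK card_n; have gK := ord_unlabelK card_n.
have t_ge6 : 6 <= t.
  by have q_gt1 : 1 < q := finNzRing_gt1 F; exact: (@leq_mul 2 3).
have dist_ge u v : 5 * `|block (f u) - block (f v)| <= gdist e u v + 4.
  apply: leq_trans (block_dist_le _ _) _; rewrite leq_add2r.
  apply: (gdist_ge_potential (l := fun i => layer (f i))) => [x y | x].
    exact: layer_adj.
  apply: leq_trans (layer_le _) _; rewrite card_ord -card_n card_vtx; nia.
have sum_dist_ge :
    5 * (\sum_(u < n) \sum_(v < n | u < v) `|block (f u) - block (f v)|)
    <= wiener e + 4 * (\sum_(u < n) \sum_(v < n | u < v) 1).
  rewrite /wiener !big_distrr -big_split /=; apply: leq_sum => u _.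
  rewrite !big_distrr -big_split /=; apply: leq_sum => v _.
  by rewrite muln1; exact: dist_ge.
(* Double both sides to pass to ordered pairs and count them. *)
rewrite -sum_block_dist -(sum_pairs_relabel fK gK (fun x y => `|block x - block y|)).
rewrite -sum_upper_pairs => [|u v|u]; rewrite ?distnn 1?distnC //.
by rewrite -card_upper_pairs; lia.
Qed.

Lemma wiener_gap :
  5 * ((b + 1) * t * ((b + 1) * t - 1) * (n + 2 * (1 + a * t)))
  < 6 * t * wiener e + 39 * t * (n * n.-1).
Proof.
have t_gt0 : 0 < t by rewrite muln_gt0 andbT; apply/card_gt0P; exists 0%R.
have n_eq : n = 1 + (a + b) * t by rewrite -card_n card_vtx.
have gap := polynomial_gap a_gt0 b_gt0 t_gt0 (path_dist_sumE b).
have wiener_ge := wiener_block_bound.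
move: (wiener e) wiener_ge => W wiener_ge; rewrite n_eq in wiener_ge *.
apply: leq_ltn_trans
  (_ : _ <= t * (5 * (b + 1) * ((b + 1) * t) * (3 + (3 * a + b) * t))) _.
  have -> : t * (5 * (b + 1) * ((b + 1) * t) * (3 + (3 * a + b) * t))
      = 5 * ((b + 1) * t * ((b + 1) * t) * (1 + (a + b) * t + 2 * (1 + a * t))).
    by ring.
  by rewrite leq_mul2l leq_mul2r leq_mul2l leq_subr !orbT.
rewrite -(ltn_pmul2l t_gt0) in gap; apply: (leq_trans gap).
rewrite (_ : (1 + (a + b) * t).-1 = (a + b) * t) ?add1n // in wiener_ge.
set S := (X in 5 * X <= _) in wiener_ge *; set N := (X in 4 * X) in wiener_ge *.
rewrite (_ : t * (15 * S + 27 * N) = 3 * t * (5 * S) + 27 * t * N); last by ring.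
rewrite (_ : 6 * t * W + 39 * t * N = 3 * t * (2 * W + 4 * N) + 27 * t * N);
  last by ring.
by rewrite leq_add2r leq_mul2l wiener_ge orbT.
Qed.

Local Open Scope ring_scope.

Lemma avg_dist_adj :
  let thetaD : rat := (1 + a * t)%:R in
  let thetad : rat := t%:R in
  let M : rat := n%:R - thetaD + thetad in
  avg_dist e > (5%:R / 3%:R) * (M * (M - 1) / (n%:R * (n%:R - 1)))
    * ((n%:R + 2%:R * thetaD) / thetad) - 13%:R.
Proof.
cbv zeta; set thetaD : rat := (1 + a * t)%:R; set thetad : rat := t%:R.
set M := n%:R - thetaD + thetad.
have t_gt0 : (0 < t)%N by rewrite muln_gt0 andbT; apply/card_gt0P; exists 0%R.
have n_eq : n = (1 + (a + b) * t)%N by rewrite -card_n card_vtx.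
have n_gt1 : (1 < n)%N.
  by rewrite n_eq -[X in (X < _)%N]addn0 ltn_add2l muln_gt0 addn_gt0 a_gt0.
have M_gt0 : (0 < (b + 1) * t)%N by rewrite muln_gt0 addn1 t_gt0.
have M_eq : M = ((b + 1) * t)%:R.
  by rewrite /M /thetaD /thetad n_eq !natrD !natrM; ring.
have n1_eq : (n.-1%:R : rat) = n%:R - 1 by rewrite -subn1 natrB // ltnW.
have C2_eq : ('C(n, 2)%:R : rat) = n%:R * (n%:R - 1) / 2.
  by rewrite -n1_eq -natrM -bin2_double natrM mulrC mulKf // pnatr_eq0.
rewrite /avg_dist C2_eq; apply: avg_dist_of_gap; rewrite ?ltr1n ?ltr0n //.
have lhs : (5 * ((b + 1) * t * ((b + 1) * t - 1) * (n + 2 * (1 + a * t))))%N%:R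
    = 5 * (M * (M - 1) * (n%:R + 2 * thetaD)) :> rat.
  by rewrite M_eq /thetaD !natrM natrB // !natrD !natrM; ring.
have rhs : (6 * t * wiener e + 39 * t * (n * n.-1))%N%:R
    = 6 * thetad * (wiener e)%:R + 39 * thetad * (n%:R * (n%:R - 1)) :> rat.
  by rewrite /thetad -n1_eq !natrD !natrM.
by rewrite -/M -lhs -rhs ltr_nat wiener_gap.
Qed.

End AverageDistance.

Local Open Scope ring_scope.

Theorem theorem6p3 (delta Delta n : nat) :
  (3 <= delta)%N ->
  prime_power delta.+1 ->
  (exists a : nat, (0 < a)%N /\ Delta = (a * (delta + 2)).+1) ->
  (exists b : nat, (0 < b)%N /\
     n = ((Delta - 1) * (delta + 1) + 1 + b * ((delta + 1) * (delta + 2)))%N) ->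
  exists e : rel 'I_n,
    [/\ simple_graph e /\ connected_graph e, maxdeg e = Delta,
        (forall u, (delta <= deg e u)%N), ~ has_C4 e &
        (let thetaD : rat := ((Delta - 1) * (delta + 1) + 1)%:R in
        let thetad : rat := ((delta + 2) * (delta + 1))%:R in
        let M : rat := n%:R - thetaD + thetad in
        avg_dist e >
          (5%:R / 3%:R) * (M * (M - 1) / (n%:R * (n%:R - 1)))
            * ((n%:R + 2%:R * thetaD) / thetad) - 13%:R)].
Proof.
move=> _ [p [k [p_prime [k_gt0 q_pow]]]] [a [a_gt0 Delta_eq]] [b [b_gt0 n_eq]].
have [F _ card_F] := pPrimePowerField p_prime k_gt0.
have q_eq : #|F| = delta.+1 by rewrite card_F -q_pow.
have t_eq : (#|F| * #|F|.+1 = (delta + 2) * (delta + 1))%N by rewrite q_eq; ring.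
have thetaD_eq : ((Delta - 1) * (delta + 1) + 1 = 1 + a * (#|F| * #|F|.+1))%N.
  by rewrite Delta_eq subn1 /= t_eq; ring.
have card_n : #|{: vtx F a b}| = n by rewrite card_vtx n_eq thetaD_eq t_eq; ring.
have fK := ord_labelK card_n; have gK := ord_unlabelK card_n.
exists (relabel (ord_label card_n) (@adj F a b)); split.
- split; first exact: relabel_simple (adj_simple F a b).
  by apply: (relabel_connected fK gK); exact: adj_connected.
- by rewrite (maxdeg_relabel fK gK) maxdeg_adj // q_eq Delta_eq addn2.
- move=> u; rewrite (deg_relabel fK gK).
  by have := deg_adj_ge a_gt0 (ord_label card_n u); rewrite q_eq.
- by apply: (relabel_noC4 fK); exact: adj_noC4.
- by rewrite thetaD_eq -t_eq; exact: avg_dist_adj.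
Qed.
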